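(* Let $N\in\mathbb N$, $F=\mathbb Z/N\mathbb Z$, $k\in\mathbb N_0$, and let $\sigma\in G_F$ be a $2k$-block configuration. Then \[4k\le\|\Delta A_F(\sigma)\|_1\le 4k^2,\] and $\|\Delta A_F(\sigma)\|_1$ is a multiple of $4$.
   Context: $G_F=\{-1,1\}^F$, $A_F(\sigma)_f=\sum_{j\in F}\sigma_j\sigma_{j+f}$, $(\Delta h)_f=\frac14(h_{f-1}-2h_f+h_{f+1})$, and $\|h\|_1=\sum_{f\in F}|h_f|$. A configuration $\sigma$ is a $2k$-block configuration if the number of $f\in F$ with $\sigma_f\neq\sigma_{f+1}$ equals $2k$ (equivalently, $\sigma$ is a cyclic translate of $(1)^{m_1}(-1)^{m_2}\cdots(1)^{m_{2k-1}}(-1)^{m_{2k}}$ with all $m_\ell\in\mathbb N$, or $\sigma=\pm\mathbf 1$ when $k=0$). *)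

From mathcomp Require Import all_boot all_order all_algebra.
Set Implicit Arguments. Unset Strict Implicit. Unset Printing Implicit Defensive.
Import Order.TTheory GRing.Theory Num.Theory.
Local Open Scope ring_scope.

(* F = Z/NZ with N = n.+1 >= 1, represented by 'I_n.+1.
   Functions on F are functions 'I_n.+1 -> R; [cyc h j] evaluates h at the
   class of the natural number j modulo N. *)
Definition cyc (R : Type) (n : nat) (h : 'I_n.+1 -> R) (j : nat) : R :=
  h (inord (j %% n.+1)).

Definition spin_config (n : nat) (sigma : 'I_n.+1 -> int) : Prop :=
  forall i, sigma i = 1 \/ sigma i = -1.

Definition autocorr (n : nat) (sigma : 'I_n.+1 -> int) (f : 'I_n.+1) : int :=
  \sum_(j < n.+1) sigma j * cyc sigma (j + f)%N.

(* (Delta h)_f = 1/4 (h_{f-1} - 2 h_f + h_{f+1});  f-1 = f + (N-1) mod N *)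
Definition discLap (n : nat) (h : 'I_n.+1 -> rat) (f : 'I_n.+1) : rat :=
  (cyc h (f + n)%N - 2 * h f + cyc h f.+1) / 4.

Definition norm1 (n : nat) (h : 'I_n.+1 -> rat) : rat :=
  \sum_(f < n.+1) `|h f|.

Definition num_sign_changes (n : nat) (sigma : 'I_n.+1 -> int) : nat :=
  #|[set f : 'I_n.+1 | sigma f != cyc sigma f.+1]|.

(* Write e_j = (sigma_{j+1} - sigma_j)/2, which lies in {0, 1, -1}, so that
   sum_j |e_j| = 2k and sum_j e_j = 0.  Summation by parts shows that
   Delta A_F(sigma) = -Z, where Z_m = sum_j e_j e_{j+m} is the cyclic
   autocorrelation of e.  Then Z_0 = 2k, sum_m Z_m = (sum_j e_j)^2 = 0 and
   sum_m |Z_m| <= (sum_j |e_j|)^2 = 4k^2, while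
   |Z_0| + sum_{m <> 0} |Z_m| >= Z_0 + |sum_{m <> 0} Z_m| = 2 Z_0 = 4k.
   Finally sum_m |Z_m| = sum_m (|Z_m| - Z_m), whose summands are even, vanish
   at m = 0, agree at m and N - m, and are multiples of 4 at m = N/2, where
   Z_m is itself even; pairing m with N - m gives divisibility by 4. *)

From mathcomp Require Import all_boot all_order all_algebra.
From mathcomp Require Import ring zify.
Set Implicit Arguments. Unset Strict Implicit. Unset Printing Implicit Defensive.
Import Order.TTheory GRing.Theory Num.Theory.
Local Open Scope ring_scope.

Definition periodic (T : Type) (N : nat) (u : nat -> T) : Prop :=
  forall j, u (j + N)%N = u j.

Section Periodic.
Variables (T : Type) (N : nat) (u : nat -> T).
Hypothesis u_per : periodic N u.

Lemma periodicD_mul j q : u (j + q * N)%N = u j.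
Proof. by elim: q => [|q IHq]; rewrite ?addn0 // mulSn addnA addnAC u_per. Qed.

Lemma periodic_mod j : u (j %% N) = u j.
Proof. by rewrite {2}(divn_eq j N) addnC periodicD_mul. Qed.

Lemma periodic_addmod i m : u (i + m %% N)%N = u (i + m)%N.
Proof. by rewrite -periodic_mod modnDmr periodic_mod. Qed.

End Periodic.

Section PeriodicSums.
Variables (V : nmodType) (N : nat).

Lemma sum_periodic_succ (w : nat -> V) : periodic N w ->
  \sum_(j < N) w j.+1 = \sum_(j < N) w j.
Proof.
case: N => [|n] w_per; first by rewrite !big_ord0.
by rewrite big_ord_recr big_ord_recl /= -[n.+1]add0n w_per addrC.
Qed.

Lemma sum_periodic_shift (w : nat -> V) c : periodic N w ->
  \sum_(j < N) w (j + c)%N = \sum_(j < N) w j.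
Proof.
move=> w_per; elim: c => [|c IHc]; first by under eq_bigr do rewrite addn0.
rewrite -IHc -(sum_periodic_succ (w := fun j => w (j + c)%N)) => [|j].
  by under eq_bigr do rewrite addnS.
by rewrite addnAC w_per.
Qed.

End PeriodicSums.

Definition ccorr (R : pzSemiRingType) (N : nat) (u v : nat -> R) (m : nat) : R :=
  \sum_(j < N) u j * v (j + m)%N.

Section Correlation.
Variables (R : comPzRingType) (N : nat).
Implicit Types (u v e : nat -> R) (m : nat).

Lemma ccorr_addmod u v m : periodic N v -> ccorr N u v (m %% N) = ccorr N u v m.
Proof. by move=> v_per; apply: eq_bigr => j _; rewrite periodic_addmod. Qed.

Lemma ccorrDN u v m : periodic N v -> ccorr N u v (m + N) = ccorr N u v m.
Proof. by move=> v_per; apply: eq_bigr => j _; rewrite addnA v_per. Qed.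

Lemma ccorrS_sub u v m :
  ccorr N u v m.+1 - ccorr N u v m = ccorr N u (fun j => v j.+1 - v j) m.
Proof. by rewrite -sumrB; apply: eq_bigr => j _; rewrite addnS mulrBr. Qed.

Lemma ccorrZ c u v m :
  ccorr N (fun j => c * u j) (fun j => c * v j) m = c ^+ 2 * ccorr N u v m.
Proof. by rewrite /ccorr mulr_sumr; apply: eq_bigr => j _; ring. Qed.

Lemma ccorr_succ u v m : periodic N u -> periodic N v ->
  ccorr N (fun j => u j.+1) (fun j => v j.+1) m = ccorr N u v m.
Proof.
move=> u_per v_per; apply: (sum_periodic_succ (w := fun j => u j * v (j + m)%N)).
by move=> j; rewrite addnAC u_per v_per.
Qed.

(* [m + N.-1] stands for m - 1 modulo N. *)
Lemma ccorr_second_diff u m : periodic N u ->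
  let d j := u j.+1 - u j in
  ccorr N u u (m + N.-1) - 2 * ccorr N u u m + ccorr N u u m.+1 = - ccorr N d d m.
Proof.
move=> u_per d.
have d_per : periodic N d by move=> j; rewrite /d -addSn !u_per.
have [N0|N_gt0] := posnP N.
  by rewrite /ccorr N0 !big_ord0 mulr0 subrr addr0 oppr0.
have up : ccorr N u u m.+1 - ccorr N u u m = ccorr N u d m by rewrite ccorrS_sub.
have down : ccorr N u u m - ccorr N u u (m + N.-1) =
            \sum_(j < N) u j.+1 * d (j + m)%N.
  have mN : (m + N)%N = (m + N.-1).+1 by rewrite -addnS prednK.
  rewrite -[in LHS](ccorrDN _ m u_per) mN ccorrS_sub.
  rewrite -ccorr_succ //; apply: eq_bigr => j _.
  by rewrite -d_per /d; congr (_ * (u _ - u _)); lia.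
have -> : ccorr N u u (m + N.-1) - 2 * ccorr N u u m + ccorr N u u m.+1 =
   (ccorr N u u m.+1 - ccorr N u u m) - (ccorr N u u m - ccorr N u u (m + N.-1)).
  by ring.
rewrite up down /ccorr -sumrB -sumrN; apply: eq_bigr => j _.
by rewrite /d; ring.
Qed.

Section Autocorrelation.
Variable e : nat -> R.
Hypothesis e_per : periodic N e.

Lemma sum_ccorr : \sum_(m < N) ccorr N e e m = (\sum_(j < N) e j) ^+ 2.
Proof.
rewrite /ccorr exchange_big /= expr2 mulr_suml; apply: eq_bigr => j _.
rewrite -mulr_sumr; congr (_ * _).
by rewrite -(sum_periodic_shift j e_per); apply: eq_bigr => i _; rewrite addnC.
Qed.

Lemma ccorr_sym m : (m <= N)%N -> ccorr N e e (N - m) = ccorr N e e m.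
Proof.
move=> le_mN; rewrite /ccorr.
rewrite -(sum_periodic_shift (w := fun j => e j * e (j + m)%N) (N - m)).
  by apply: eq_bigr => j _; rewrite -addnA subnK // e_per mulrC.
by move=> j; rewrite addnAC !e_per.
Qed.

Lemma ccorr_half h : N = (h + h)%N ->
  ccorr N e e h = (\sum_(j < h) e j * e (j + h)%N) *+ 2.
Proof.
move=> N_hh; rewrite /ccorr N_hh big_split_ord /= mulr2n; congr (_ + _).
apply: eq_bigr => i _; rewrite mulrC; congr (_ * _).
  by rewrite addnC addnA -N_hh addnC e_per.
by rewrite addnC.
Qed.

End Autocorrelation.
End Correlation.

Section NormBounds.
Variables (R : numDomainType) (N : nat) (e : nat -> R).
Hypothesis e_per : periodic N e.

Lemma sum_norm_ccorr_le :
  \sum_(m < N) `|ccorr N e e m| <= (\sum_(j < N) `|e j|) ^+ 2.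
Proof.
have norm_per : periodic N (fun j => `|e j|) by move=> j; rewrite e_per.
rewrite -(sum_ccorr norm_per).
apply: ler_sum => m _; apply: le_trans (ler_norm_sum _ _ _) _.
by apply: ler_sum => j _; rewrite normrM.
Qed.

End NormBounds.

Lemma ccorr0_ge0 (R : realDomainType) N (e : nat -> R) : 0 <= ccorr N e e 0.
Proof. by apply: sumr_ge0 => j _; rewrite addn0 -expr2 sqr_ge0. Qed.

Lemma ccorr0_le_sum_norm_ccorr (R : realDomainType) n (e : nat -> R) :
  periodic n.+1 e -> \sum_(j < n.+1) e j = 0 ->
  ccorr n.+1 e e 0 *+ 2 <= \sum_(m < n.+1) `|ccorr n.+1 e e m|.
Proof.
move=> e_per sum_e0.
have sum_shifted : \sum_(m < n) ccorr n.+1 e e m.+1 = - ccorr n.+1 e e 0.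
  apply/eqP; rewrite -addr_eq0 addrC -(big_ord_recl _ (ccorr n.+1 e e)).
  by rewrite sum_ccorr // sum_e0 expr2 mulr0.
rewrite big_ord_recl ger0_norm ?ccorr0_ge0 // mulr2n lerD2l.
apply: le_trans (ler_norm_sum _ _ _); rewrite sum_shifted normrN.
by rewrite ger0_norm ?ccorr0_ge0.
Qed.

Lemma dvdz_normB (d x : int) : (d %| x)%Z -> (d * 2 %| `|x| - x)%Z.
Proof.
case/dvdzP=> q ->; have [q_ge0|q_lt0] := lerP 0 (q * d).
  by rewrite ger0_norm // subrr dvdz0.
by rewrite ltr0_norm //; apply/dvdzP; exists (- q); ring.
Qed.

Lemma dvd4_sum_palindrome (g : nat -> int) (a b : nat) :
  (forall i, (a <= i <= b)%N -> g (a + b - i)%N = g i) ->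
  (forall i, (2 %| g i)%Z) ->
  (forall i, (i + i)%N = (a + b)%N -> (4 %| g i)%Z) ->
  (4 %| \sum_(a <= i < b.+1) g i)%Z.
Proof.
move=> + g_even; have [d lt_d] := ubnP (b - a).
elim: d => // d IHd in a b lt_d *.
have [lt_ab|gt_ab|<-] := ltngtP a b; last 2 first.
- by rewrite big_geq.
- by move=> _ g_mid; rewrite big_nat1; apply: g_mid.
case: b lt_ab lt_d => // b lt_ab lt_d g_sym g_mid.
have g_ab : g b.+1 = g a by rewrite -[b.+1](addKn a) (g_sym a) // leqnn ltnW.
rewrite big_ltn 1?ltnW // big_nat_recr //= g_ab addrCA.
apply: rpredD.
  apply: IHd => [|i /andP [lt_ai le_ib]|i]; rewrite ?addSnnS.
  - lia.
  - by apply: g_sym; rewrite ltnW //= leqW.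
  - exact: g_mid.
by case/dvdzP: (g_even a) => q ->; apply/dvdzP; exists q; ring.
Qed.

Lemma dvd4_sum_norm_ccorr n (e : nat -> int) :
  periodic n.+1 e -> \sum_(j < n.+1) e j = 0 ->
  (4 %| \sum_(m < n.+1) `|ccorr n.+1 e e m|)%Z.
Proof.
move=> e_per sum_e0; set Z := ccorr n.+1 e e.
have -> : \sum_(m < n.+1) `|Z m| = \sum_(m < n.+1) (`|Z m| - Z m).
  by rewrite sumrB sum_ccorr // sum_e0 expr2 mulr0 subr0.
rewrite -(big_mkord xpredT (fun m => `|Z m| - Z m)) big_ltn //.
rewrite ger0_norm ?ccorr0_ge0 // subrr add0r.
apply: dvd4_sum_palindrome => [i /andP [_ le_in] | i | i ii_eq].
- by rewrite add1n /Z ccorr_sym // leqW.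
- by have := dvdz_normB (dvd1z (Z i)); rewrite mul1r.
- apply: (dvdz_normB (d := 2)); apply/dvdzP.
  by exists (\sum_(j < i) e j * e (j + i)%N); rewrite /Z ccorr_half // mulr_natr.
Qed.

Lemma cyc_periodic (T : Type) n (h : 'I_n.+1 -> T) : periodic n.+1 (cyc h).
Proof. by move=> j; rewrite /cyc modnDr. Qed.

Lemma cyc_ord (T : Type) n (h : 'I_n.+1 -> T) (i : 'I_n.+1) : cyc h i = h i.
Proof. by rewrite /cyc modn_small ?ltn_ord // inord_val. Qed.

Lemma autocorrE n (sigma : 'I_n.+1 -> int) (f : 'I_n.+1) :
  autocorr sigma f = ccorr n.+1 (cyc sigma) (cyc sigma) f.
Proof. by apply: eq_bigr => j _; rewrite cyc_ord. Qed.

Lemma cyc_autocorr (R : pzRingType) n (sigma : 'I_n.+1 -> int) j :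
  cyc (fun f => (autocorr sigma f)%:~R : R) j =
  (ccorr n.+1 (cyc sigma) (cyc sigma) j)%:~R.
Proof.
by rewrite /cyc autocorrE inordK ?ltn_pmod // ccorr_addmod //; apply: cyc_periodic.
Qed.

Definition jump n (sigma : 'I_n.+1 -> int) (j : nat) : int :=
  if cyc sigma j.+1 == cyc sigma j then 0 else cyc sigma j.+1.

Section SpinConfiguration.
Variables (n : nat) (sigma : 'I_n.+1 -> int).
Hypothesis sigma_spin : spin_config sigma.

Lemma jump_periodic : periodic n.+1 (jump sigma).
Proof. by move=> j; rewrite /jump -addSn !cyc_periodic. Qed.

Let cyc_spin j : cyc sigma j = 1 \/ cyc sigma j = -1 := sigma_spin _.

Lemma cycS_sub j : cyc sigma j.+1 - cyc sigma j = 2 * jump sigma j.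
Proof. by rewrite /jump; case: (cyc_spin j.+1) (cyc_spin j) => -> [] ->. Qed.

Lemma normr_jump j : `|jump sigma j| = (cyc sigma j.+1 != cyc sigma j)%:R.
Proof. by rewrite /jump; case: (cyc_spin j.+1) (cyc_spin j) => -> [] ->. Qed.

Lemma jump_sqr j : jump sigma j * jump sigma j = `|jump sigma j|.
Proof. by rewrite /jump; case: (cyc_spin j.+1) (cyc_spin j) => -> [] ->. Qed.

Lemma sum_jump : \sum_(j < n.+1) jump sigma j = 0.
Proof.
have : 2 * \sum_(j < n.+1) jump sigma j = 0.
  rewrite mulr_sumr; under eq_bigr do rewrite -cycS_sub.
  by rewrite sumrB (sum_periodic_succ (cyc_periodic sigma)) subrr.
by move/eqP; rewrite mulf_eq0 => /orP [] /eqP.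
Qed.

Lemma sum_normr_jump :
  \sum_(j < n.+1) `|jump sigma j| = (num_sign_changes sigma)%:R.
Proof.
under eq_bigr do rewrite normr_jump.
rewrite -natr_sum /num_sign_changes -sum1_card; congr _%:R.
rewrite [RHS]big_mkcond; apply: eq_bigr => i _.
by rewrite inE cyc_ord eq_sym; case: eqP.
Qed.

Lemma second_diff_autocorr f :
  let a := ccorr n.+1 (cyc sigma) (cyc sigma) in
  a (f + n)%N - 2 * a f + a f.+1 = - 4 * ccorr n.+1 (jump sigma) (jump sigma) f.
Proof.
move=> a; rewrite /a (ccorr_second_diff f (cyc_periodic sigma)) mulNr.
rewrite -[4]/(2 ^+ 2 : int) -ccorrZ; congr (- _).
by apply: eq_bigr => j _; rewrite !cycS_sub.
Qed.

Lemma discLap_autocorr f :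
  discLap (fun f => (autocorr sigma f)%:~R) f =
  - (ccorr n.+1 (jump sigma) (jump sigma) f)%:~R.
Proof.
have := congr1 (fun x : int => x%:~R : rat) (second_diff_autocorr f).
rewrite /discLap !cyc_autocorr autocorrE /=.
rewrite !rmorphD !rmorphN !rmorphM /= => ->.
by rewrite mulrAC (_ : (-4)%:~R = - 4 :> rat) // mulNr divff // mulN1r.
Qed.

End SpinConfiguration.

Theorem mainTheorem10 (n k : nat) (sigma : 'I_n.+1 -> int) :
  spin_config sigma ->
  num_sign_changes sigma = (2 * k)%N ->
  let L := norm1 (discLap (fun f => (autocorr sigma f)%:~R)) in
  (4 * k)%:R <= L /\ L <= (4 * k ^ 2)%:R /\ exists m : int, L = 4 * m%:~R.
Proof.
move=> sigma_spin changes L.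
have jump_per := jump_periodic sigma.
have sum_jump0 := sum_jump sigma_spin.
set Z := \sum_(f < n.+1) `|ccorr n.+1 (jump sigma) (jump sigma) f|.
have -> : L = Z%:~R.
  rewrite /L /norm1 /Z rmorph_sum; apply: eq_bigr => f _.
  by rewrite discLap_autocorr // normrN /= intr_norm.
have sum_norm_jump : \sum_(j < n.+1) `|jump sigma j| = (2 * k)%:R.
  by rewrite sum_normr_jump // changes.
have Z0 : ccorr n.+1 (jump sigma) (jump sigma) 0 = (2 * k)%:R.
  by rewrite -sum_norm_jump; apply: eq_bigr => j _; rewrite addn0 jump_sqr.
rewrite !pmulrn !ler_int; split; [|split].
- have := ccorr0_le_sum_norm_ccorr jump_per sum_jump0; rewrite Z0 -mulr_natr -natrM natz.
  by apply: le_trans; rewrite lez_nat; lia.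
- have := sum_norm_ccorr_le jump_per; rewrite sum_norm_jump -natrX natz.
  by move/le_trans; apply; rewrite lez_nat; lia.
- have /dvdzP [q Zq] := dvd4_sum_norm_ccorr jump_per sum_jump0.
  by exists q; rewrite /Z Zq rmorphM mulrC.
Qed.
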